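(* Let $G$ be a group of order $k$. The ideal $I(G,* )$ of graded $*$-identities of $M_k(\mathbb{C})$ with the $G$-crossed-product grading and the transpose involution is generated as a $(T,* )$-ideal by the elements (1) $x_{i,e}x_{j,e}-x_{j,e}x_{i,e}$ for all $i,j\ge1$, and (2) $x_{i,e}-x_{i,e}^*$ for all $i\ge1$.
   Context: Let $G=\{g_1=e,\dots,g_k\}$ be a finite group of order $k$. Index rows/columns of $k\times k$ matrices by $G$, let $E_{a,b}$ be the matrix units, $P_g=\sum_{h\in G}E_{h,hg}$, and let $M_k(\mathbb{C})_g=\{DP_g: D\text{ diagonal}\}$ (the $G$-crossed-product grading); the involution $*$ is the transpose. $F=\mathbb{Q}\{x_{i,g},x^*_{i,g}: i\ge1,g\in G\}$ is the free associative algebra with involution $*$ (the anti-automorphism exchanging $x_{i,g}$ and $x^*_{i,g}$) and grading $\deg x_{i,g}=g$, $\deg x^*_{i,g}=g^{-1}$. $I(G,* )$ is the set of $f\in F$ vanishing under every substitution $x_{i,g}\mapsto A_{i,g}\in M_k(\mathbb{C})_g$, $x^*_{i,g}\mapsto A_{i,g}^T$. A $(T,* )$-ideal is an ideal of $F$ stable under $*$ and under every algebra endomorphism $\varphi$ of $F$ with $\varphi(x_{i,g})$ homogeneous of degree $g$ and $\varphi(x^*_{i,g})=\varphi(x_{i,g})^*$; the $(T,* )$-ideal generated by a set is the smallest $(T,* )$-ideal containing it. *)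

From HB Require Import structures.
From mathcomp Require Import all_boot all_order all_algebra all_fingroup all_field.
Set Implicit Arguments. Unset Strict Implicit. Unset Printing Implicit Defensive.
Import GRing.Theory Num.Theory.
Local Open Scope ring_scope.

Section FreeAlg.
Variable gT : finGroupType.

(* A letter (i, g, b): b = false is x_{i,g}, b = true is x*_{i,g}. *)
Definition letter := (nat * gT * bool)%type.
Definition word := seq letter.

Inductive term : Type :=
| TC of rat
| TV of letter
| TAdd of term & term
| TMul of term & term.

(* Coefficient of a word in the noncommutative polynomial denoted by a term;
   this identifies a term with an element of the free algebra Q<X>. *)
Fixpoint coef (t : term) : word -> rat :=
  match t with
  | TC c => fun w => if w is [::] then c else 0
  | TV l => fun w => (w == [:: l])%:R
  | TAdd a b => fun w => coef a w + coef b w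
  | TMul a b => fun w =>
      \sum_(k < (size w).+1) coef a (take k w) * coef b (drop k w)
  end.

Definition feq (s t : term) : Prop := forall w, coef s w = coef t w.

Fixpoint tstar (t : term) : term :=
  match t with
  | TC c => TC c
  | TV (i, g, b) => TV (i, g, ~~ b)
  | TAdd a b => TAdd (tstar a) (tstar b)
  | TMul a b => TMul (tstar b) (tstar a)
  end.

Definition ldeg (l : letter) : gT :=
  let: (i, g, b) := l in if b then (g^-1)%g else g.
Definition wdeg (w : word) : gT := foldr (fun l acc => (ldeg l * acc)%g) 1%g w.

Definition homogeneous (g : gT) (t : term) : Prop :=
  forall w, coef t w != 0 -> wdeg w = g.

Fixpoint tsubst (s : nat -> gT -> term) (t : term) : term :=
  match t with
  | TC c => TC c
  | TV (i, g, b) => if b then tstar (s i g) else s i g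
  | TAdd a b => TAdd (tsubst s a) (tsubst s b)
  | TMul a b => TMul (tsubst s a) (tsubst s b)
  end.

Definition graded_sub (s : nat -> gT -> term) : Prop :=
  forall i g, homogeneous g (s i g).

Definition is_TStar_ideal (P : term -> Prop) : Prop :=
  (forall f h, feq f h -> P f -> P h) /\
  P (TC 0) /\
  (forall f h, P f -> P h -> P (TAdd f h)) /\
  (forall f h, P f -> P (TMul h f) /\ P (TMul f h)) /\
  (forall f, P f -> P (tstar f)) /\
  (forall s, graded_sub s -> forall f, P f -> P (tsubst s f)).

Definition in_TStar_ideal_gen (S : term -> Prop) (f : term) : Prop :=
  forall P, is_TStar_ideal P -> (forall t, S t -> P t) -> P f.

Definition gens7 (t : term) : Prop :=
  (exists i j, t = TAdd (TMul (TV (i, 1%g, false)) (TV (j, 1%g, false)))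
                        (TMul (TC (-1)) (TMul (TV (j, 1%g, false)) (TV (i, 1%g, false)))))
  \/ (exists i, t = TAdd (TV (i, 1%g, false)) (TMul (TC (-1)) (TV (i, 1%g, true)))).

End FreeAlg.

Section Matrices.
Variables (gT : finGroupType) (C : numClosedFieldType).

Local Notation k := #|gT|.

(* Rows/columns indexed by G via enum_val : 'I_k -> gT.
   P_g = sum_h E_{h, hg}. *)
Definition Pmx (g : gT) : 'M[C]_k :=
  \matrix_(a, b) ((enum_val b == (enum_val a * g)%g)%:R : C).

Definition graded_comp (g : gT) (A : 'M[C]_k) : Prop :=
  exists d : 'rV[C]_k, A = diag_mx d *m Pmx g.

Fixpoint eval (A : nat -> gT -> 'M[C]_k) (t : term gT) : 'M[C]_k :=
  match t with
  | TC c => (ratr c)%:M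
  | TV (i, g, b) => if b then (A i g)^T else A i g
  | TAdd a b => eval A a + eval A b
  | TMul a b => eval A a *m eval A b
  end.

Definition gstar_identity (f : term gT) : Prop :=
  forall A : nat -> gT -> 'M[C]_k, (forall i g, graded_comp g (A i g)) -> eval A f = 0.

End Matrices.

From HB Require Import structures.
From mathcomp Require Import all_boot all_order all_algebra all_fingroup all_field.
Set Implicit Arguments. Unset Strict Implicit. Unset Printing Implicit Defensive.
Import GRing.Theory Num.Theory.
Local Open Scope ring_scope.

(* Soundness: the neutral component of M_k(C) consists of the diagonal
   matrices, which commute and are symmetric; and graded identities are stable
   under products, the transpose and graded substitutions.

   Completeness: a word w traces a walk in the Cayley graph of G, where x_{i,g}
   crosses the edge (i, g, a) from a to a g and x*_{i,g} crosses it backwards.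
   On the generic graded matrices A_{i,g} = diag(t_{i,g,a})_a P_g, with
   independent commuting entries t, the entry (1, deg w) of w(A) is the product
   of the t along the walk of w from 1. So if f is an identity, the
   coefficients of f on the words tracing a given multiset of edges sum to 0.
   Conversely, let J be the ideal generated by (1) and (2). Since w has degree
   e iff its walk is closed, generator (2) lets one reverse closed subwalks
   modulo J (generators (1) follow from (2)), and such reversals connect any
   two words tracing the same multiset of edges.
   Hence f is congruent modulo J to a combination of class representatives
   with vanishing coefficients. *)

Section Monomials.
Variable gT : finGroupType.
Local Notation term := (term gT).
Local Notation word := (word gT).
Implicit Types (t a b : term) (w u v : word).

Definition mono w : term := foldr (fun l t => TMul (TV l) t) (TC gT 1) w.

Definition is_monomial t u := forall w, coef t w = (w == u)%:R.

Definition tsub a b : term := TAdd a (TMul (TC gT (-1)) b).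

Definition tsum (F : word -> term) (s : seq word) : term :=
  foldr (fun w t => TAdd (F w) t) (TC gT 0) s.

Lemma take_drop_eqE w u v n : (n <= size w)%N ->
  ((take n w == u) && (drop n w == v)) = ((w == u ++ v) && (n == size u)).
Proof.
move=> hn; apply/andP/andP => [[/eqP <- /eqP <-]|[/eqP -> /eqP ->]].
  by rewrite cat_take_drop size_takel.
by rewrite take_size_cat // drop_size_cat.
Qed.

Lemma is_monomial_mul a b u v :
  is_monomial a u -> is_monomial b v -> is_monomial (TMul a b) (u ++ v).
Proof.
move=> ha hb w /=.
under eq_bigr => n _ do rewrite ha hb -natrM mulnb take_drop_eqE ?(leq_ord n) //.
case: eqP => [->|_]; last by rewrite big1.
have hu : (size u < (size (u ++ v)).+1)%N by rewrite ltnS size_cat leq_addr.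
rewrite (bigD1 (Ordinal hu)) //= eqxx big1 ?addr0 // => n /eqP hn.
by case: eqP => // hn'; case: hn; apply: val_inj.
Qed.

Lemma is_monomial_mono w : is_monomial (mono w) w.
Proof. by elim: w => [[]|l w IH] //=; apply: (@is_monomial_mul (TV l) _ [:: l]). Qed.

Lemma coef_TCmul c t w : coef (TMul (TC gT c) t) w = c * coef t w.
Proof.
rewrite /= big_ord_recl /= take0 drop0 big1 ?addr0 // => n _.
by case: w n => [|x w] n /=; [case: n | rewrite mul0r].
Qed.

Lemma coef_tsub a b w : coef (tsub a b) w = coef a w - coef b w.
Proof. by rewrite [LHS]/= -/(coef (TMul (TC gT (-1)) b) _) coef_TCmul mulN1r. Qed.

Lemma coef_tsum F s w : coef (tsum F s) w = \sum_(v <- s) coef (F v) w.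
Proof.
elim: s => [|v s IH]; first by rewrite big_nil; case: w.
by rewrite big_cons -IH.
Qed.

Lemma coef_mul_tsubr a b b' w :
  coef (TMul a (tsub b b')) w = coef (TMul a b) w - coef (TMul a b') w.
Proof.
transitivity (\sum_(n < (size w).+1) coef a (take n w) * coef (tsub b b') (drop n w)) => //.
by rewrite [RHS]/= -sumrB; apply: eq_bigr => n _; rewrite coef_tsub mulrBr.
Qed.

Lemma coef_mul_tsubl a a' b w :
  coef (TMul (tsub a a') b) w = coef (TMul a b) w - coef (TMul a' b) w.
Proof.
transitivity (\sum_(n < (size w).+1) coef (tsub a a') (take n w) * coef b (drop n w)) => //.
by rewrite [RHS]/= -sumrB; apply: eq_bigr => n _; rewrite coef_tsub mulrBl.
Qed.

Lemma feq_add a a' b b' : feq a a' -> feq b b' -> feq (TAdd a b) (TAdd a' b').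
Proof. by move=> ha hb w /=; rewrite ha hb. Qed.

Lemma feq_mul a a' b b' : feq a a' -> feq b b' -> feq (TMul a b) (TMul a' b').
Proof. by move=> ha hb w /=; apply: eq_bigr => n _; rewrite ha hb. Qed.

Lemma feq_is_monomial a b u : is_monomial a u -> is_monomial b u -> feq a b.
Proof. by move=> ha hb w; rewrite ha hb. Qed.

End Monomials.

Section IdealJ.
Variable gT : finGroupType.
Local Notation term := (term gT).
Local Notation word := (word gT).
Local Notation letter := (letter gT).
Implicit Types (t a b f h : term) (w p q u v c : word).

Definition inJ f := in_TStar_ideal_gen (@gens7 gT) f.

Lemma inJ_feq f h : feq f h -> inJ f -> inJ h.
Proof. by move=> e hf P HP HS; apply: HP.1 e _; apply: hf. Qed.

Lemma inJ0 : inJ (TC gT 0).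
Proof. by move=> P [_ []]. Qed.

Lemma inJ_add f h : inJ f -> inJ h -> inJ (TAdd f h).
Proof. by move=> hf hh P HP HS; apply: HP.2.2.1; [apply: hf | apply: hh]. Qed.

Lemma inJ_mull f h : inJ f -> inJ (TMul h f).
Proof. by move=> hf P HP HS; apply: (HP.2.2.2.1 f h _).1; apply: hf. Qed.

Lemma inJ_mulr f h : inJ f -> inJ (TMul f h).
Proof. by move=> hf P HP HS; apply: (HP.2.2.2.1 f h _).2; apply: hf. Qed.

Lemma inJ_tsubst s f : graded_sub s -> inJ f -> inJ (tsubst s f).
Proof. by move=> gs hf P HP HS; apply: HP.2.2.2.2.2 gs _ _; apply: hf. Qed.

Lemma inJ_gens f : gens7 f -> inJ f.
Proof. by move=> hf P HP HS; apply: HS. Qed.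

Lemma inJ_tsum F s : (forall w, w \in s -> inJ (F w)) -> inJ (tsum F s).
Proof.
elim: s => [|w s IH] hs; first exact: inJ0.
apply: inJ_add; first by apply: hs; rewrite inE eqxx.
by apply: IH => v hv; apply: hs; rewrite inE hv orbT.
Qed.

Definition wcongr u v := inJ (tsub (mono u) (mono v)).

Lemma wcongr_refl w : wcongr w w.
Proof. by apply: inJ_feq inJ0 => u; rewrite coef_tsub subrr; case: u. Qed.

Lemma wcongr_sym u v : wcongr u v -> wcongr v u.
Proof.
move=> h; apply: inJ_feq (inJ_mull (TC gT (-1)) h) => w.
by rewrite coef_TCmul !coef_tsub mulN1r opprB.
Qed.

Lemma wcongr_trans u v w : wcongr u v -> wcongr v w -> wcongr u w.
Proof.
move=> huv hvw; apply: inJ_feq (inJ_add huv hvw) => x.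
transitivity (coef (tsub (mono u) (mono v)) x + coef (tsub (mono v) (mono w)) x) => //.
by rewrite !coef_tsub addrA subrK.
Qed.

Lemma wcongr_catl p u v : wcongr u v -> wcongr (p ++ u) (p ++ v).
Proof.
move=> h; apply: inJ_feq (inJ_mull (mono p) h) => w.
rewrite coef_mul_tsubr coef_tsub !(is_monomial_mul (is_monomial_mono p) (is_monomial_mono _)).
by rewrite !is_monomial_mono.
Qed.

Lemma wcongr_catr q u v : wcongr u v -> wcongr (u ++ q) (v ++ q).
Proof.
move=> h; apply: inJ_feq (inJ_mulr (mono q) h) => w.
rewrite coef_mul_tsubl coef_tsub !(is_monomial_mul (is_monomial_mono _) (is_monomial_mono q)).
by rewrite !is_monomial_mono.
Qed.

Lemma wcongr_ctx p q c c' : wcongr c c' -> wcongr (p ++ c ++ q) (p ++ c' ++ q).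
Proof. by move=> h; apply: wcongr_catl; apply: wcongr_catr. Qed.

Definition flipl (l : letter) : letter := let: (i, g, b) := l in (i, g, ~~ b).

Definition wstar w : word := rev (map flipl w).

Lemma wstar_cons l w : wstar (l :: w) = wstar w ++ [:: flipl l].
Proof. by rewrite /wstar /= rev_cons cats1. Qed.

Lemma wstar_cat u v : wstar (u ++ v) = wstar v ++ wstar u.
Proof. by rewrite /wstar map_cat rev_cat. Qed.

Lemma fliplK : involutive flipl.
Proof. by case=> [[i g] b] /=; rewrite negbK. Qed.

Lemma ldeg_flipl l : ldeg (flipl l) = (ldeg l)^-1%g.
Proof. by case: l => [[i g] []] /=; rewrite ?invgK. Qed.

Lemma wdeg_cat u v : wdeg (u ++ v) = (wdeg u * wdeg v)%g.
Proof. by elim: u => [|l u IH] /=; rewrite ?mul1g // IH mulgA. Qed.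

Lemma wdeg_wstar w : wdeg (wstar w) = (wdeg w)^-1%g.
Proof.
elim: w => [|l w IH]; first by rewrite invg1.
by rewrite wstar_cons wdeg_cat IH /= ldeg_flipl mulg1 invMg.
Qed.

Lemma is_monomial_tstar w : is_monomial (tstar (mono w)) (wstar w).
Proof.
elim: w => [[]|[[i g] b] w IH] //.
by rewrite wstar_cons; apply: (@is_monomial_mul _ _ _ _ [:: _]).
Qed.

(* Substitute the degree-1 monomial [mono c] in generator (2). *)
Lemma wcongr_wstar c : wdeg c = 1%g -> wcongr c (wstar c).
Proof.
move=> hc; pose s (i : nat) (g : gT) := if g == 1%g then mono c else TC gT 0.
have gs : graded_sub s.
  move=> i g w; rewrite /s; have [->|_] := eqVneq g 1%g.
    by rewrite is_monomial_mono; have [-> _ //|_] := eqVneq w c; rewrite eqxx.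
  by case: w => [|? ?]; rewrite eqxx.
have g0 : gens7 (TAdd (TV (0%N, 1%g, false)) (TMul (TC gT (-1)) (TV (0%N, 1%g, true)))).
  by right; exists 0%N.
apply: inJ_feq (inJ_tsubst gs (inJ_gens g0)).
rewrite /= /s eqxx; apply: feq_add => //; apply: feq_mul => //.
exact: feq_is_monomial (is_monomial_tstar c) (is_monomial_mono _).
Qed.

End IdealJ.

Section Walks.
Variable gT : finGroupType.
Local Notation word := (word gT).
Local Notation letter := (letter gT).
Implicit Types (w p q u v : word) (a x y : gT) (l m : letter).

(* The edge [(i, g, a)] joins [a] to [a * g] and is labelled [x_{i,g}]; a
   letter [x*_{i,g}] traverses the edge [(i, g, a * g^-1)] backwards. *)
Definition edge := (nat * gT * gT)%type.

Definition step a l : gT := (a * ldeg l)%g.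

Definition ledge a l : edge :=
  let: (i, g, b) := l in if b then (i, g, a * g^-1)%g else (i, g, a).

Fixpoint edges a w : seq edge :=
  if w is l :: w' then ledge a l :: edges (step a l) w' else [::].

Fixpoint verts a w : seq gT :=
  if w is l :: w' then a :: verts (step a l) w' else [:: a].

Definition esrc (e : edge) : gT := e.2.
Definition edst (e : edge) : gT := (e.2 * e.1.2)%g.
Definition touches (X : seq gT) (e : edge) := (esrc e \in X) || (edst e \in X).
Definition inside (X : seq gT) (e : edge) := (esrc e \in X) && (edst e \in X).

Lemma edges_cat a u v : edges a (u ++ v) = edges a u ++ edges (a * wdeg u)%g v.
Proof. by elim: u a => [|l u IH] a /=; rewrite ?mulg1 // IH /step mulgA. Qed.

Lemma ledge_flipl a l : ledge (step a l) (flipl l) = ledge a l.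
Proof. by case: l => [[i g] []]; rewrite /step /= ?mulgK ?mulgKV. Qed.

Lemma edges_wstar a w : edges (a * wdeg w)%g (wstar w) = rev (edges a w).
Proof.
elim: w a => [|l w IH] a //=.
rewrite wstar_cons edges_cat rev_cons -cats1 mulgA IH.
by rewrite wdeg_wstar mulgK /= -/(step a l) ledge_flipl.
Qed.

Lemma touches_ledge X a l : touches X (ledge a l) = (a \in X) || (step a l \in X).
Proof. by case: l => [[i g] []]; rewrite /touches /esrc /edst /step /= ?mulgKV // orbC. Qed.

Lemma inside_ledge X a l : inside X (ledge a l) = (a \in X) && (step a l \in X).
Proof. by case: l => [[i g] []]; rewrite /inside /esrc /edst /step /= ?mulgKV // andbC. Qed.

Lemma ledge_inj x a m l : ledge x m = ledge a l ->
  (m = l /\ x = a) \/ (m = flipl l /\ x = step a l).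
Proof.
case: m => [[i' g'] b']; case: l => [[i g] b]; rewrite /step /=.
case: b'; case: b => -[-> -> e].
- by left; split => //; move/mulIg: e.
- by right; split => //; rewrite -e mulgKV.
- by right.
- by left.
Qed.

Lemma edges_splitP a w e : e \in edges a w ->
  exists p m q, w = p ++ m :: q /\ ledge (a * wdeg p)%g m = e.
Proof.
elim: w a => [|l w IH] a //=; rewrite inE => /orP [/eqP ->|/IH [p [m [q [-> he]]]]].
  by exists [::], l, w; rewrite mulg1.
by exists (l :: p), m, q; rewrite /= mulgA.
Qed.

Lemma verts_splitP a w y : y \in verts a w ->
  exists p q, w = p ++ q /\ y = (a * wdeg p)%g.
Proof.
elim: w a => [|l w IH] a /=.
  by rewrite inE => /eqP ->; exists [::], [::]; rewrite mulg1.
rewrite inE => /orP [/eqP ->|/IH [p [q [-> ->]]]].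
  by exists [::], (l :: w); rewrite mulg1.
by exists (l :: p), q; rewrite /= mulgA.
Qed.

Lemma verts_head a w : a \in verts a w.
Proof. by case: w => [|? ?]; rewrite /= inE eqxx. Qed.

Lemma inside_edges a w e : e \in edges a w -> inside (verts a w) e.
Proof.
elim: w a => [|l w IH] a //=; rewrite inE => /orP [/eqP ->|/IH].
  by rewrite inside_ledge !inE eqxx verts_head orbT.
by rewrite /inside !inE => /andP [-> ->]; rewrite !orbT.
Qed.

Lemma walk_exits X x w : x \notin X -> (exists2 e, e \in edges x w & touches X e) ->
  exists2 e, e \in edges x w & touches X e && ~~ inside X e.
Proof.
elim: w x => [|l w IH] x hx [e] //=; rewrite inE.
case hs: (step x l \in X).
  move=> _ _; exists (ledge x l); first by rewrite inE eqxx.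
  by rewrite touches_ledge inside_ledge hs (negbTE hx) orbT.
case/orP => [/eqP ->|he ht]; first by rewrite touches_ledge hs (negbTE hx).
have [e' he' ht'] := IH (step x l) (negbT hs) (ex_intro2 _ _ e he ht).
by exists e' => //; rewrite inE he' orbT.
Qed.

Definition wequiv u v :=
  [/\ wcongr u v, wdeg u = wdeg v & forall a, perm_eq (edges a u) (edges a v)].

Lemma wequiv_refl w : wequiv w w.
Proof. by split=> //; apply: wcongr_refl. Qed.

Lemma wequiv_sym u v : wequiv u v -> wequiv v u.
Proof. by case=> h1 h2 h3; split=> [|//|a]; [apply: wcongr_sym | rewrite perm_sym]. Qed.

Lemma wequiv_trans u v w : wequiv u v -> wequiv v w -> wequiv u w.
Proof.
case=> h1 h2 h3 [k1 k2 k3]; split; first exact: wcongr_trans h1 k1.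
  by rewrite h2.
by move=> a; apply: perm_trans (h3 a) (k3 a).
Qed.

Lemma wequiv_cons l u v : wequiv u v -> wequiv (l :: u) (l :: v).
Proof.
case=> h1 h2 h3; split; last by move=> a; rewrite /= perm_cons.
  by have := wcongr_ctx [:: l] [::] h1; rewrite !cats0.
by rewrite /= h2.
Qed.

Lemma wequiv_wstar p c q : wdeg c = 1%g -> wequiv (p ++ c ++ q) (p ++ wstar c ++ q).
Proof.
move=> hc; split; first exact: wcongr_ctx (wcongr_wstar hc).
  by rewrite !wdeg_cat wdeg_wstar hc invg1.
move=> a; rewrite !edges_cat !wdeg_wstar hc invg1.
have := edges_wstar (a * wdeg p)%g c; rewrite hc mulg1 => ->.
by rewrite perm_cat2l perm_cat2r perm_sym perm_rev.
Qed.

Lemma wequiv_flipl_front a l p q : (a * wdeg p)%g = step a l ->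
  wequiv (p ++ flipl l :: q) (l :: wstar p ++ q).
Proof.
move=> /mulgI hp.
have hc : wdeg (p ++ [:: flipl l]) = 1%g by rewrite wdeg_cat hp /= ldeg_flipl mulg1 mulgV.
have := wequiv_wstar [::] q hc; rewrite /= -catA /= wstar_cat /=.
by rewrite /wstar /= fliplK.
Qed.

Lemma wequiv_meet_front a l p q : wdeg p = 1%g ->
  has (mem (verts (step a l) q)) (verts a p) -> exists w, wequiv (p ++ l :: q) (l :: w).
Proof.
move=> hp /hasP [y /verts_splitP [p1 [p2 [ep ey1]]] /verts_splitP [q1 [q2 [eq ey2]]]].
have h1 : wdeg p1 = (ldeg l * wdeg q1)%g by move: ey2; rewrite ey1 /step -mulgA => /mulgI.
have h2 : wdeg p2 = (wdeg p1)^-1%g.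
  by apply/eqP; rewrite eq_sym eq_invg_mul -wdeg_cat -ep hp.
have hc : wdeg (p2 ++ l :: q1) = 1%g by rewrite wdeg_cat /= h2 h1 mulVg.
have r1 := wequiv_wstar p1 q2 hc.
rewrite wstar_cat wstar_cons -!catA /= in r1.
have r2 := @wequiv_flipl_front a l (p1 ++ wstar q1) (wstar p2 ++ q2).
exists (wstar (p1 ++ wstar q1) ++ wstar p2 ++ q2).
rewrite ep eq -!catA /=; apply: wequiv_trans r1 _; rewrite -catA in r2; apply: r2.
by rewrite wdeg_cat wdeg_wstar h1 !mulgA mulgK.
Qed.

Lemma disjoint_walks_absurd a l m p q w :
  perm_eq (edges (step a l) w) (edges a (m :: p) ++ edges (step a l) q) ->
  ~~ has (mem (verts (step a l) q)) (verts a (m :: p)) -> False.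
Proof.
set X := verts a (m :: p) => hperm /hasPn hdisj.
have hnot y : y \in verts (step a l) q -> y \notin X.
  by move=> hy; apply/negP => /hdisj; rewrite /= hy.
have [|e he /andP [ht hi]] := walk_exits (w := w) (hnot _ (verts_head _ _)).
  have hin : ledge a m \in edges a (m :: p) by rewrite inE eqxx.
  exists (ledge a m); first by rewrite (perm_mem hperm) mem_cat hin.
  by have /andP [hs _] := inside_edges hin; rewrite /touches hs.
move: he; rewrite (perm_mem hperm) mem_cat => /orP [/inside_edges he|/inside_edges].
  by rewrite he in hi.
by move=> /andP [s1 s2]; move: ht; rewrite /touches (negbTE (hnot _ s1)) (negbTE (hnot _ s2)).
Qed.

(* The edge crossed by [l] occurs in [v]; if crossed backwards, reversing the
   closed walk ending there brings [l] to the front. Otherwise it is preceded by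
   a closed walk [p], which can be moved past [l] by two reversals as soon as
   [p] meets the rest of the walk; and if it does not, the walk of [w], which
   starts outside [p] but must cross the first edge of [p], would have to use
   an edge with only one end in [p]. *)
Lemma wequiv_front a l w v : perm_eq (edges a (l :: w)) (edges a v) ->
  exists w', wequiv v (l :: w').
Proof.
move=> h; have hE : ledge a l \in edges a v by rewrite -(perm_mem h) inE eqxx.
have [p [m [q [ev /ledge_inj [[em hx]|[em hx]]]]]] := edges_splitP hE; subst v m; last first.
  by exists (wstar p ++ q); apply: wequiv_flipl_front hx.
have hp : wdeg p = 1%g by apply: (@mulgI _ a); rewrite hx mulg1.
case: p {hE} hx hp h => [|m0 p] hx hp h; first by exists q; apply: wequiv_refl.
have [hh|hh] := boolP (has (mem (verts (step a l) q)) (verts a (m0 :: p))).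
  exact: wequiv_meet_front hp hh.
exfalso; apply: (disjoint_walks_absurd (w := w) _ hh).
rewrite -(perm_cons (ledge a l)); apply: perm_trans h _.
by rewrite edges_cat hx perm_sym -cat1s perm_catCA.
Qed.

Lemma wequiv_perm_edges a u v : perm_eq (edges a u) (edges a v) -> wequiv u v.
Proof.
elim: u a v => [|l u IH] a v h.
  by case: v h => [_|m v /perm_size] //; apply: wequiv_refl.
have [w r] := wequiv_front h; apply: wequiv_trans (wequiv_sym r).
apply/wequiv_cons/(IH (step a l)).
by rewrite -(perm_cons (ledge a l)); case: r => _ _ /(_ a) /(perm_trans h).
Qed.

End Walks.

Section PolynomialFunctions.
Variables (R : numDomainType) (X : eqType).
Implicit Types (L : seq (R * seq X)) (tau : X -> R).

(* A polynomial in commuting variables [X]: coefficients paired with monomials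
   written as sequences of variables. *)
Definition peval L tau := \sum_(j <- L) j.1 * \prod_(y <- j.2) tau y.

Definition msize L := (\sum_(j <- L) size j.2)%N.

(* The coefficient of [x ^+ d] in [L], as a polynomial in the other variables. *)
Definition strip x L d :=
  [seq (j.1, [seq y <- j.2 | y != x]) | j <- L & count_mem x j.2 == d].

Lemma poly_fun_eq0_coef n (c : nat -> R) :
  (forall z : R, \sum_(d < n) c d * z ^+ d = 0) -> forall d, (d < n)%N -> c d = 0.
Proof.
move=> h d hd; pose p := \poly_(i < n) c i.
suff p0 : p = 0 by have := congr1 (fun q : {poly R} => q`_d) p0; rewrite coef_poly hd coef0.
apply/eqP; apply: contraT => pn0.
have := max_poly_roots pn0 (rs := [seq i%:R | i <- iota 0 n]).
have -> : all (root p) [seq i%:R | i <- iota 0 n].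
  by apply/allP => z _; rewrite /root horner_poly h.
rewrite map_inj_uniq ?iota_uniq; last by move=> i j /eqP; rewrite eqr_nat => /eqP.
move=> /(_ isT isT); rewrite size_map size_iota => /leq_trans/(_ (size_poly _ _)).
by rewrite ltnn.
Qed.

Lemma prod_update (tau : X -> R) x z s :
  \prod_(y <- s) (if y == x then z else tau y) =
  z ^+ count_mem x s * \prod_(y <- [seq y <- s | y != x]) tau y.
Proof.
elim: s => [|y s IH]; first by rewrite !big_nil mulr1.
rewrite /= big_cons IH; case: eqP => [->|_] /=; first by rewrite exprS mulrA.
by rewrite big_cons mulrCA.
Qed.

Lemma perm_count_filterE (s m : seq X) x :
  perm_eq s m = (count_mem x s == count_mem x m) &&
                perm_eq [seq y <- s | y != x] [seq y <- m | y != x].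
Proof.
apply/idP/andP => [h|[/eqP hc hf]].
  by split; [apply/eqP; apply: (seq.permP h) | apply: perm_filter].
have e (t : seq X) : perm_eq t (nseq (count_mem x t) x ++ [seq y <- t | y != x]).
  have -> : nseq (count_mem x t) x = [seq y <- t | y == x].
    by elim: t => [|y t IH] //=; case: eqP => [->|] //=; rewrite IH.
  by rewrite perm_sym (perm_filterC (pred1 x)).
apply: perm_trans (e s) _; rewrite hc perm_sym; apply: perm_trans (e m) _.
by rewrite perm_cat2l perm_sym.
Qed.

Lemma size_le_msize j L : j \in L -> (size j.2 <= msize L)%N.
Proof. by move=> hj; rewrite /msize (big_rem _ hj) leq_addr. Qed.

Lemma msize_strip x L d j : j \in L -> x \in j.2 -> (msize (strip x L d) < msize L)%N.
Proof.
move=> hj hx; rewrite /msize big_map big_filter.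
apply: (@leq_trans (\sum_(j <- L) size [seq y <- j.2 | y != x]).+1).
  by rewrite ltnS big_mkcond /= leq_sum // => i _; case: ifP.
rewrite [leqRHS](eq_bigr (fun i => size [seq y <- i.2 | y != x] + count_mem x i.2))%N.
  rewrite big_split /= -addn1 leq_add2l (big_rem _ hj) /=.
  by rewrite -has_pred1 has_count in hx; rewrite ltn_addr.
move=> i _; rewrite size_filter addnC -(count_predC (pred1 x)) /=.
by congr (_ + _)%N; apply: eq_count => y; rewrite /= eq_sym.
Qed.

Lemma peval_strip x L n : (forall j, j \in L -> count_mem x j.2 < n)%N ->
  (forall tau, peval L tau = 0) -> forall d tau, peval (strip x L d) tau = 0.
Proof.
move=> hcnt H d tau.
pose c d' := \sum_(j <- L | count_mem x j.2 == d')
  j.1 * \prod_(y <- [seq y <- j.2 | y != x]) tau y.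
have -> : peval (strip x L d) tau = c d by rewrite /peval big_map big_filter.
have [hd|hd] := ltnP d n; last first.
  rewrite /c big_seq_cond big1 // => j /andP [hj /eqP hc].
  by have := hcnt j hj; rewrite hc ltnNge hd.
apply: poly_fun_eq0_coef hd => z; apply: etrans (H (fun y => if y == x then z else tau y)).
rewrite /peval /c; under eq_bigr => d' _ do rewrite mulr_suml big_mkcond.
rewrite exchange_big /= big_seq [RHS]big_seq; apply: eq_bigr => j hj.
rewrite prod_update (bigD1 (Ordinal (hcnt j hj))) //= eqxx [X in _ + X]big1 ?addr0.
  by rewrite [RHS]mulrCA [RHS]mulrC.
move=> d' hd'; case: eqP => // e; case/eqP: hd'; exact: val_inj.
Qed.

Lemma class_sum_constant L : (forall j, j \in L -> j.2 = [::]) ->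
  (forall tau, peval L tau = 0) -> forall m, \sum_(j <- L | perm_eq j.2 m) j.1 = 0.
Proof.
move=> hL H m; have H0 := H (fun _ => 0).
rewrite /peval big_seq (eq_bigr (fun j => j.1)) -?big_seq in H0; last first.
  by move=> j /hL ->; rewrite big_nil mulr1.
rewrite big_seq_cond (eq_bigl (fun j => (j \in L) && (m == [::]))); last first.
  by move=> j; case hj: (j \in L) => //=; rewrite hL // perm_sym; apply/perm_nilP/eqP.
case: eqP => _; last by rewrite big1 // => j /andP [].
by apply: etrans H0; rewrite [RHS]big_seq; apply: eq_bigl => j; rewrite andbT.
Qed.

Lemma peval_eq0_class_sum L : (forall tau, peval L tau = 0) ->
  forall m, \sum_(j <- L | perm_eq j.2 m) j.1 = 0.
Proof.
move: {2}(msize L) (leqnn (msize L)) => N; elim: N L => [|N IH] L hN H m.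
  apply: class_sum_constant H m => j /size_le_msize hj.
  by apply/eqP; rewrite -size_eq0 -leqn0 (leq_trans hj).
have [/hasP [j hj]|/hasPn hL] := boolP (has (fun j : R * seq X => j.2 != [::]) L); last first.
  by apply: class_sum_constant H m => j /hL /negPn /eqP.
case e: j.2 => [|x t] // _.
have hx : x \in j.2 by rewrite e mem_head.
have hcnt j' : j' \in L -> (count_mem x j'.2 < (msize L).+1)%N.
  by move=> /size_le_msize h; rewrite ltnS (leq_trans (count_size _ _) h).
have hsmall : (msize (strip x L (count_mem x m)) <= N)%N.
  by rewrite -ltnS (leq_trans (msize_strip _ hj hx) hN).
have := IH _ hsmall (peval_strip hcnt H _) [seq y <- m | y != x].
rewrite big_map big_filter_cond => h; apply: etrans h.
by apply: eq_bigl => j'; rewrite (perm_count_filterE _ _ x).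
Qed.

End PolynomialFunctions.

Section Support.
Variable gT : finGroupType.
Local Notation term := (term gT).
Local Notation word := (word gT).
Implicit Types (t a b f : term) (w u v : word).

Fixpoint supp t : seq word :=
  match t with
  | TC _ => [:: [::]]
  | TV l => [:: [:: l]]
  | TAdd a b => supp a ++ supp b
  | TMul a b => [seq u ++ v | u <- supp a, v <- supp b]
  end.

Lemma coef_notin_supp t w : w \notin supp t -> coef t w = 0.
Proof.
elim: t w => [c|l|a IHa b IHb|a IHa b IHb] w /=.
- by rewrite inE; case: w.
- by rewrite inE => /negbTE ->.
- by rewrite mem_cat negb_or => /andP [/IHa -> /IHb ->]; rewrite addr0.
- move=> hw; rewrite big1 // => n _.
  have [ha|/IHa ->] := boolP (take n w \in supp a); last by rewrite mul0r.
  have [hb|/IHb ->] := boolP (drop n w \in supp b); last by rewrite mulr0.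
  by have := allpairs_f cat ha hb; rewrite cat_take_drop (negbTE hw).
Qed.

Lemma big_uniq_delta (V : zmodType) (T : eqType) (S : seq T) (F : T -> V) x : uniq S ->
  (forall y, y != x -> F y = 0) -> \sum_(y <- S) F y = if x \in S then F x else 0.
Proof.
move=> uS h; case: ifP => hx.
  by rewrite (bigD1_seq x) //= big1 ?addr0.
rewrite big_seq big1 // => y hy; apply: h; apply: contraFN hx => /eqP <-; exact: hy.
Qed.

Lemma big_take_drop_cat (V : zmodType) (F : word -> word -> V) Sa Sb S :
  uniq S -> uniq Sa -> uniq Sb -> (forall u v, F u v != 0 -> (u \in Sa) && (v \in Sb)) ->
  (forall u v, u \in Sa -> v \in Sb -> u ++ v \in S) ->
  \sum_(w <- S) \sum_(n < (size w).+1) F (take n w) (drop n w) =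
  \sum_(u <- Sa) \sum_(v <- Sb) F u v.
Proof.
move=> uS uA uB hF hS.
have pickF x y : F x y =
    \sum_(u <- Sa) \sum_(v <- Sb) (if (u == x) && (v == y) then F u v else 0).
  rewrite (big_uniq_delta (x := x)) //; last first.
    by move=> u /negbTE hu; rewrite big1 // => v _; rewrite hu.
  case: ifP => hx; last by apply/eqP; apply: contraFT hx => /hF /andP [].
  under eq_bigr => v _ do rewrite eqxx /=.
  rewrite (big_uniq_delta (F := fun v => if v == y then F x v else 0) (x := y)) //; last first.
    by move=> v /negbTE ->.
  by rewrite eqxx; case: ifP => // hy; apply/eqP; apply: contraFT hy => /hF /andP [_ ->].
have split_w w : \sum_(n < (size w).+1) F (take n w) (drop n w) =
    \sum_(u <- Sa) \sum_(v <- Sb) (if w == u ++ v then F u v else 0).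
  rewrite (eq_bigr _ (fun n _ => pickF _ _)) exchange_big /=.
  apply: eq_bigr => u _; rewrite exchange_big /=; apply: eq_bigr => v _.
  rewrite -big_mkcond /=.
  rewrite (eq_bigl (fun n : 'I_(size w).+1 => (w == u ++ v) && (n == size u :> nat))); last first.
    by move=> n; rewrite eq_sym [v == _]eq_sym -take_drop_eqE // -ltnS.
  case: eqP => [e|_]; last by rewrite big_pred0.
  by rewrite (@big_ord1_eq _ _ _ (fun _ => F u v)) e size_cat ltnS leq_addr.
rewrite (eq_bigr _ (fun w _ => split_w w)) exchange_big /=.
apply: eq_bigr => u _; rewrite exchange_big /=; apply: eq_bigr => v _.
rewrite (big_uniq_delta (F := fun w => if w == u ++ v then F u v else 0) (x := u ++ v)) //.
  rewrite eqxx; case: ifP => // hx; apply/esym/eqP; apply: contraFT hx => /hF /andP [h1 h2].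
  exact: hS.
by move=> w /negbTE ->.
Qed.

End Support.

Section Evaluation.
Variables (gT : finGroupType) (C : numClosedFieldType).
Local Notation k := #|gT|.
Local Notation term := (term gT).
Local Notation word := (word gT).
Local Notation M := 'M[C]_k.
Implicit Types (t a b f : term) (w u v : word) (A : nat -> gT -> M).

Definition evw A w : M := eval A (mono w).

Lemma evw_nil A : evw A [::] = 1%:M.
Proof. by rewrite /evw /= rmorph1. Qed.

Lemma evw_cons A l w : evw A (l :: w) = eval A (TV l) *m evw A w.
Proof. by []. Qed.

Lemma evw_cat A u v : evw A (u ++ v) = evw A u *m evw A v.
Proof. by elim: u => [|l u IH]; rewrite ?evw_nil ?mul1mx //= !evw_cons IH mulmxA. Qed.

Lemma eval_expand A t S : uniq S -> {subset supp t <= S} ->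
  eval A t = \sum_(w <- S) ratr (coef t w) *: evw A w.
Proof.
elim: t S => [c|l|a IHa b IHb|a IHa b IHb] S uS hS.
- rewrite (big_uniq_delta (x := [::])) //; last by case=> // ? ? _; rewrite /= rmorph0 scale0r.
  by rewrite hS ?inE //= evw_nil scalemx1.
- rewrite (big_uniq_delta (x := [:: l])) //; last first.
    by move=> w /negbTE /= ->; rewrite rmorph0 scale0r.
  by rewrite hS ?inE //= eqxx rmorph1 scale1r /evw /= rmorph1 mulmx1.
- rewrite /= (IHa S) ?(IHb S) // -?big_split /=; last 2 first.
  + by move=> w hw; apply: hS; rewrite /= mem_cat hw orbT.
  + by move=> w hw; apply: hS; rewrite /= mem_cat hw.
  by apply: eq_bigr => w _; rewrite rmorphD scalerDl.
have hA := undup_uniq (supp a); have hB := undup_uniq (supp b).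
rewrite /= (IHa _ hA) ?(IHb _ hB) => [|w|w]; rewrite ?mem_undup //.
rewrite mulmx_suml.
transitivity (\sum_(u <- undup (supp a)) \sum_(v <- undup (supp b))
   ((ratr (coef a u) * ratr (coef b v)) *: evw A (u ++ v))).
  apply: eq_bigr => u _; rewrite mulmx_sumr; apply: eq_bigr => v _.
  by rewrite -scalemxAl -scalemxAr scalerA evw_cat.
rewrite -(big_take_drop_cat (S := S)) //; last 2 first.
- move=> u v; apply: contraR; rewrite negb_and !mem_undup.
  by case/orP => /coef_notin_supp ->; rewrite rmorph0 ?mul0r ?mulr0 scale0r.
- move=> u v; rewrite !mem_undup => hu hv; apply: hS.
  exact: (allpairs_f (fun x y => x ++ y) hu hv).
apply: eq_bigr => w _; rewrite rmorph_sum scaler_suml; apply: eq_bigr => n _.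
by rewrite rmorphM cat_take_drop.
Qed.

Lemma eval_feq A s t : feq s t -> eval A s = eval A t.
Proof.
move=> e; have uS := undup_uniq (supp s ++ supp t).
rewrite (eval_expand A uS) ?(eval_expand A (t := t) uS) => [|w hw|w hw].
- by apply: eq_bigr => w _; rewrite e.
- by rewrite mem_undup mem_cat hw orbT.
- by rewrite mem_undup mem_cat hw.
Qed.

Lemma eval_tstar A t : eval A (tstar t) = (eval A t)^T.
Proof.
elim: t => [c|[[i g] []]|a IHa b IHb|a IHa b IHb] /=.
- by rewrite tr_scalar_mx.
- by rewrite trmxK.
- by [].
- by rewrite IHa IHb linearD.
- by rewrite IHa IHb trmx_mul.
Qed.

Lemma eval_tsubst_comp A s t : eval A (tsubst s t) = eval (fun i g => eval A (s i g)) t.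
Proof.
elim: t => [c|[[i g] []]|a IHa b IHb|a IHa b IHb] //=.
- by rewrite eval_tstar.
- by rewrite IHa IHb.
- by rewrite IHa IHb.
Qed.

End Evaluation.

Section GradedMatrices.
Variables (gT : finGroupType) (C : numClosedFieldType).
Local Notation k := #|gT|.
Local Notation term := (term gT).
Local Notation word := (word gT).
Local Notation M := 'M[C]_k.
Implicit Types (t f : term) (w : word) (X Y : M) (A : nat -> gT -> M).

Definition mx_graded (g : gT) X :=
  forall a b : 'I_k, enum_val b != (enum_val a * g)%g -> X a b = 0.

Definition graded_subst A := forall i g, graded_comp g (A i g).

Lemma graded_compP g X : graded_comp g X <-> mx_graded g X.
Proof.
split => [[d ->] a b hb|h]; first by rewrite mul_diag_mx !mxE (negbTE hb) mulr0.
exists (\row_a X a (enum_rank (enum_val a * g)%g)); apply/matrixP => a b.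
rewrite mul_diag_mx !mxE; case: eqP => [<-|/eqP hb]; last by rewrite mulr0 h.
by rewrite enum_valK mulr1.
Qed.

Lemma mx_graded0 g : mx_graded g 0.
Proof. by move=> a b _; rewrite mxE. Qed.

Lemma mx_gradedD g X Y : mx_graded g X -> mx_graded g Y -> mx_graded g (X + Y).
Proof. by move=> hX hY a b hb; rewrite mxE hX ?hY ?addr0. Qed.

Lemma mx_gradedZ g c X : mx_graded g X -> mx_graded g (c *: X).
Proof. by move=> hX a b hb; rewrite mxE hX ?mulr0. Qed.

Lemma mx_graded_sum g (I : Type) (r : seq I) (F : I -> M) :
  (forall i, mx_graded g (F i)) -> mx_graded g (\sum_(i <- r) F i).
Proof.
move=> h; elim: r => [|i r IH]; first by rewrite big_nil; apply: mx_graded0.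
by rewrite big_cons; apply: mx_gradedD.
Qed.

Lemma mx_gradedM g h X Y : mx_graded g X -> mx_graded h Y -> mx_graded (g * h)%g (X *m Y).
Proof.
move=> hX hY a c hc; rewrite mxE big1 // => b _.
have [e|n] := eqVneq (enum_val b) (enum_val a * g)%g; last by rewrite hX ?mul0r.
by rewrite hY ?mulr0 //; apply: contra hc => /eqP ->; rewrite e mulgA.
Qed.

Lemma mx_gradedT g X : mx_graded g X -> mx_graded g^-1 X^T.
Proof. by move=> hX a b hb; rewrite mxE hX //; apply: contra hb => /eqP ->; rewrite mulgK. Qed.

Lemma mx_graded_scalar c : mx_graded 1 (c%:M : M).
Proof.
move=> a b hb; rewrite mxE; case: eqP => [e|]; last by rewrite mulr0n.
by move: hb; rewrite e mulg1 eqxx.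
Qed.

Lemma mx_graded_evw A w : graded_subst A -> mx_graded (wdeg w) (evw A w).
Proof.
move=> hA; elim: w => [|[[i g] b] w IH]; first by rewrite evw_nil; apply: mx_graded_scalar.
rewrite evw_cons; apply: mx_gradedM IH; case: b => /=; last exact/graded_compP.
by apply/mx_gradedT/graded_compP.
Qed.

Lemma mx_graded_eval A t g : graded_subst A -> homogeneous g t -> mx_graded g (eval A t).
Proof.
move=> hA ht; rewrite (eval_expand A (undup_uniq (supp t))) => [|w]; last by rewrite mem_undup.
apply: mx_graded_sum => w; have [->|nz] := eqVneq (coef t w) 0.
  by rewrite rmorph0 scale0r; apply: mx_graded0.
by apply: mx_gradedZ; rewrite -(ht w nz); apply: mx_graded_evw.
Qed.

Lemma gstar_identity_ideal : is_TStar_ideal (@gstar_identity gT C).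
Proof.
split=> [f h e hf A hA|]; first by rewrite -(eval_feq A e); apply: hf.
split=> [A _|]; first by rewrite /= rmorph0 raddf0.
split=> [f h hf hh A hA|]; first by rewrite /= hf // hh // addr0.
split=> [f h hf|]; first by split=> A hA; rewrite /= hf // ?mulmx0 ?mul0mx.
split=> [f hf A hA|s gs f hf A hA]; first by rewrite eval_tstar hf // trmx0.
rewrite eval_tsubst_comp; apply: hf => i g.
by apply/graded_compP; apply: mx_graded_eval.
Qed.

Lemma Pmx1 : Pmx C (1 : gT) = 1%:M.
Proof. by apply/matrixP => a b; rewrite !mxE mulg1 (inj_eq enum_val_inj) eq_sym. Qed.

(* The neutral component consists of the diagonal matrices. *)
Lemma gens7_identity t : gens7 t -> gstar_identity C t.
Proof.
case=> [[i [j ->]]|[i ->]] A hA /=.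
  have [d1 ->] := hA i 1%g; have [d2 ->] := hA j 1%g.
  by rewrite Pmx1 !mulmx1 diag_mxC rmorphN1 mul_scalar_mx scaleN1r subrr.
have [d ->] := hA i 1%g.
by rewrite Pmx1 !mulmx1 tr_diag_mx rmorphN1 mul_scalar_mx scaleN1r subrr.
Qed.

End GradedMatrices.

Section ClassRepresentative.
Variables (T : eqType) (e : rel T).
Hypotheses (e_refl : reflexive e) (e_sym : symmetric e) (e_trans : transitive e).
Implicit Types (S : seq T) (x y : T).

Definition class_rep S x := head x [seq y <- S | e y x].

Lemma class_rep_mem S x : x \in S -> (class_rep S x \in S) && e (class_rep S x) x.
Proof.
move=> hx; suff: class_rep S x \in [seq y <- S | e y x] by rewrite mem_filter andbC.
rewrite /class_rep.
case E: [seq y <- S | e y x] => [|y s]; last by rewrite mem_head.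
by move: (mem_filter (e^~ x) x S); rewrite E hx e_refl.
Qed.

Lemma class_rep_eq S x y : x \in S -> e x y -> class_rep S x = class_rep S y.
Proof.
move=> hx hxy; rewrite /class_rep (@eq_filter _ _ (e^~ y)); last first.
  by move=> z /=; apply/idP/idP => h; [apply: e_trans hxy | apply: e_trans h _; rewrite e_sym].
case E: [seq z <- S | e z y] => [|z s] //.
by move: (mem_filter (e^~ y) x S); rewrite E hx hxy.
Qed.

Lemma sum_class_rep_eq0 (R : nzRingType) (c : T -> R) S u :
  (forall x, \sum_(y <- S | e y x) c y = 0) ->
  \sum_(y <- S) c y * (u == class_rep S y)%:R = 0.
Proof.
move=> hc; have [/hasP [x hx /eqP hu]|/hasPn hu] := boolP (has (fun y => class_rep S y == u) S).
  have /andP [hu1 hu2] := class_rep_mem hx; rewrite hu in hu1 hu2.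
  apply: etrans (hc u); rewrite [RHS]big_mkcond [LHS]big_seq [RHS]big_seq.
  apply: eq_bigr => y hy.
  have -> : (u == class_rep S y) = e y u.
    apply/eqP/idP => [->|hyu]; first by rewrite e_sym; case/andP: (class_rep_mem hy).
    by rewrite (class_rep_eq hy hyu) (class_rep_eq hu1 hu2) hu.
  by case: (e y u); rewrite ?mulr1 ?mulr0.
rewrite big_seq big1 // => y /hu; rewrite eq_sym => /negbTE ->; exact: mulr0.
Qed.

End ClassRepresentative.

Lemma sum_enum_val_delta (T : finType) (R : nzSemiRingType) (F : 'I_#|T| -> R) y :
  \sum_c (enum_val c == y)%:R * F c = F (enum_rank y).
Proof.
rewrite (bigD1 (enum_rank y)) //= enum_rankK eqxx mul1r big1 ?addr0 // => c hc.
by case: eqP => [e|]; [move: hc; rewrite -e enum_valK eqxx | rewrite mul0r].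
Qed.

Section Completeness.
Variables (gT : finGroupType) (C : numClosedFieldType).
Local Notation k := #|gT|.
Local Notation term := (term gT).
Local Notation word := (word gT).
Local Notation M := 'M[C]_k.
Implicit Types (f : term) (w : word) (tau : edge gT -> C).

Definition generic_mx tau : nat -> gT -> M :=
  fun i g => diag_mx (\row_(a < k) tau (i, g, enum_val a)) *m Pmx C g.

Lemma generic_mx_graded tau : graded_subst (generic_mx tau).
Proof. by move=> i g; exists (\row_(a < k) tau (i, g, enum_val a)). Qed.

Lemma generic_mx_TV tau l (a c : 'I_k) :
  eval (generic_mx tau) (TV l) a c =
  (enum_val c == step (enum_val a) l)%:R * tau (ledge (enum_val a) l).
Proof.
case: l => [[i g] []] /=; last by rewrite /generic_mx mul_diag_mx !mxE /step /= mulrC.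
rewrite mxE /generic_mx mul_diag_mx !mxE /step /=.
have -> : (enum_val a == enum_val c * g)%g = (enum_val c == enum_val a * g^-1)%g.
  by apply/eqP/eqP => ->; rewrite ?mulgK ?mulgKV.
by case: eqP => [->|_]; rewrite ?mulr1 ?mul1r ?mulr0 ?mul0r.
Qed.

Lemma evw_generic_mx tau w (a b : 'I_k) :
  evw (generic_mx tau) w a b =
  (enum_val b == (enum_val a * wdeg w)%g)%:R * \prod_(e <- edges (enum_val a) w) tau e.
Proof.
elim: w a => [|l w IH] a.
  by rewrite evw_nil big_nil mulr1 mxE mulg1 (inj_eq enum_val_inj) eq_sym.
rewrite evw_cons mxE (eq_bigr (fun c => (enum_val c == step (enum_val a) l)%:R *
   (tau (ledge (enum_val a) l) * evw (generic_mx tau) w c b))); last first.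
  by move=> c _; rewrite generic_mx_TV mulrA.
by rewrite sum_enum_val_delta IH enum_rankK /= big_cons /step mulgA mulrCA.
Qed.

Lemma class_sum_eq0 f : gstar_identity C f -> forall w0,
  \sum_(w <- undup (supp f) | perm_eq (edges 1%g w) (edges 1%g w0)) coef f w = 0.
Proof.
move=> hf w0; set S := undup (supp f).
pose L := [seq (ratr (coef f w) * (wdeg w0 == wdeg w)%:R : C, edges 1%g w) | w <- S].
have hL tau : peval L tau = 0.
  (* the entry (1, deg w0) of f(A) *)
  have := hf _ (generic_mx_graded tau).
  rewrite (eval_expand _ (undup_uniq (supp f))) => [|w]; last by rewrite mem_undup.
  move/matrixP => /(_ (enum_rank 1%g) (enum_rank (wdeg w0))).
  rewrite summxE !mxE => h; apply: etrans h; rewrite /peval big_map.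
  by apply: eq_bigr => w _; rewrite mxE evw_generic_mx !enum_rankK mul1g mulrA.
have := peval_eq0_class_sum hL (edges 1%g w0); rewrite big_map => h.
suff : ratr (\sum_(w <- S | perm_eq (edges 1%g w) (edges 1%g w0)) coef f w) = 0 :> C.
  by move/eqP; rewrite fmorph_eq0 => /eqP.
rewrite rmorph_sum; apply: etrans h; apply: eq_bigr => w hw /=.
by have [_ -> _] := wequiv_perm_edges hw; rewrite eqxx mulr1.
Qed.

Lemma gstar_identity_inJ f : gstar_identity C f -> inJ f.
Proof.
move=> hf; set S := undup (supp f).
pose e := [rel u v : word | perm_eq (edges 1%g u) (edges 1%g v)].
have e_refl : reflexive e by move=> u; apply: perm_refl.
have e_sym : symmetric e by move=> u v; apply: perm_sym.
have e_trans : transitive e by move=> v u w; apply: perm_trans.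
pose rep := class_rep e S.
have hJ : inJ (tsum (fun w => TMul (TC gT (coef f w)) (tsub (mono w) (mono (rep w)))) S).
  apply: inJ_tsum => w hw; apply: inJ_mull.
  have /andP [_ hr] := class_rep_mem e_refl hw.
  by have [/wcongr_sym] := wequiv_perm_edges hr.
apply: inJ_feq hJ => u; rewrite coef_tsum.
under eq_bigr => w _ do rewrite coef_TCmul coef_tsub !is_monomial_mono mulrBr.
rewrite sumrB /rep (sum_class_rep_eq0 e_refl e_sym e_trans u (class_sum_eq0 hf)) subr0.
rewrite (big_uniq_delta (x := u)) ?undup_uniq //; last first.
  by move=> w hw; rewrite eq_sym (negbTE hw) mulr0.
rewrite mem_undup; case: ifP => [_|/negbT /coef_notin_supp //]; by rewrite eqxx mulr1.
Qed.

End Completeness.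

Theorem mainTheorem7 (gT : finGroupType) (C : numClosedFieldType) (f : term gT) :
  gstar_identity C f <-> in_TStar_ideal_gen (@gens7 gT) f.
Proof.
split; first exact: gstar_identity_inJ.
by move=> hf; apply: hf; [apply: gstar_identity_ideal | apply: gens7_identity].
Qed.
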